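(* Let $m_{-1}<m_1$ and $n_1<n_{-1}$ be real. For $(a,b)\in[0,\infty)^2$ let $F_+(a,b)=\frac{a}{a+b}m_1+\frac{b}{a+b}m_{-1}-a$ and $F_-(a,b)=\frac{b}{a+b}n_{-1}+\frac{a}{a+b}n_1-b$ (with the convention $0/0=1/2$). There is a unique $(a,b)\in[0,\infty)^2$ such that $a$ is a global maximizer of $a'\mapsto F_+(a',b)$ over $[0,\infty)$ and $b$ is a global maximizer of $b'\mapsto F_-(a,b')$ over $[0,\infty)$. It is $(a,b)=\Big(\frac{M^2N}{(M+N)^2},\frac{MN^2}{(M+N)^2}\Big)$ with $M=m_1-m_{-1}$, $N=n_{-1}-n_1$; in particular $a,b>0$. *)

From mathcomp Require Import all_boot all_order all_algebra.
Set Implicit Arguments. Unset Strict Implicit. Unset Printing Implicit Defensive.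
Import Order.TTheory GRing.Theory Num.Theory.
Local Open Scope ring_scope.

Definition frac (R : realFieldType) (x s : R) : R :=
  if s == 0 then 2^-1 else x / s.

Definition Fplus (R : realFieldType) (m1 mm1 a b : R) : R :=
  frac a (a + b) * m1 + frac b (a + b) * mm1 - a.

Definition Fminus (R : realFieldType) (n1 nm1 a b : R) : R :=
  frac b (a + b) * nm1 + frac a (a + b) * n1 - b.

Definition is_equilibrium (R : realFieldType) (m1 mm1 n1 nm1 a b : R) : Prop :=
  [/\ 0 <= a, 0 <= b,
      (forall a' : R, 0 <= a' -> Fplus m1 mm1 a' b <= Fplus m1 mm1 a b) &
      (forall b' : R, 0 <= b' -> Fminus n1 nm1 a b' <= Fminus n1 nm1 a b)].

(* For [a, b > 0] the difference [F_+(a', b) - F_+(a, b)] has the sign of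
   [(a' - a) ((m_1 - m_{-1}) b - (a' + b)(a + b))]; as this must be [<= 0] for [a']
   on both sides of [a], a best reply [a] to [b] satisfies [(m_1 - m_{-1}) b = (a + b)^2],
   and conversely this equation makes the product [-(a' - a)^2 (a + b)].  Against [b = 0]
   there is no best reply at all (the payoff [m_1 - a'] grows as [a' > 0] shrinks, while
   [a' = 0] only earns [(m_1 + m_{-1}) / 2]), so an equilibrium is interior.  Since
   [F_-(a, b) = F_+(b, a)] with [(n_{-1}, n_1)] for [(m_1, m_{-1})], it solves
   [M b = (a + b)^2 = N a], which forces [a + b = M N / (M + N)]. *)
From Pilot Require Import Defs.
From mathcomp Require Import all_boot all_order all_algebra.
From mathcomp Require Import ring lra.
Set Implicit Arguments. Unset Strict Implicit. Unset Printing Implicit Defensive.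
Import Order.TTheory GRing.Theory Num.Theory.
Local Open Scope ring_scope.

Lemma eq0_of_one_sided_max (R : realFieldType) (a s D : R) : 0 < a -> 0 < s ->
  (forall t, - a <= t -> t * (D - t * s) <= 0) -> D = 0.
Proof.
move=> ha hs H; apply/eqP; apply: contraT => hD.
(* [t := a D / (a s + |D|)] has the sign of [D], [|t| < a] and [0 < |t s| < |D|]. *)
have he : 0 < a * s + `|D| by rewrite ltr_wpDr ?mulr_gt0.
have ht : - a <= a * D / (a * s + `|D|).
  rewrite ler_pdivlMr // mulNr -mulrN ler_pM2l //.
  have := ler_norm (- D); rewrite normrN; nra.
have := H _ ht.
have -> : a * D / (a * s + `|D|) * (D - a * D / (a * s + `|D|) * s)
        = a * D ^+ 2 * `|D| / (a * s + `|D|) ^+ 2.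
  by field; rewrite gt_eqF.
have haD : 0 < a * D ^+ 2 by rewrite mulr_gt0 // exprn_even_gt0 // hD orbT.
by rewrite leNgt divr_gt0 ?exprn_gt0 // mulr_gt0 // normr_gt0.
Qed.

Definition best_reply (R : realFieldType) (m1 mm1 a b : R) : Prop :=
  forall a' : R, 0 <= a' -> Fplus m1 mm1 a' b <= Fplus m1 mm1 a b.

Lemma Fminus_Fplus (R : realFieldType) (n1 nm1 a b : R) :
  Fminus n1 nm1 a b = Fplus nm1 n1 b a.
Proof. by rewrite /Fminus /Fplus [b + a]addrC. Qed.

Lemma is_equilibriumE (R : realFieldType) (m1 mm1 n1 nm1 a b : R) :
  is_equilibrium m1 mm1 n1 nm1 a b <->
  [/\ 0 <= a, 0 <= b, best_reply m1 mm1 a b & best_reply nm1 n1 b a].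
Proof.
rewrite /is_equilibrium /best_reply.
split=> -[-> -> HF HG]; split=> // c hc.
  by rewrite -!Fminus_Fplus; apply: HG.
by rewrite !Fminus_Fplus; apply: HG.
Qed.

Section BestReply.

Variables (R : realFieldType) (m1 mm1 : R).
Let M := m1 - mm1.

Lemma FplusE (a b : R) : a + b != 0 ->
  Fplus m1 mm1 a b = (a * m1 + b * mm1) / (a + b) - a.
Proof. by move=> hab; rewrite /Fplus /Defs.frac (negbTE hab); field. Qed.

Lemma Fplus_subE (a a' b : R) : 0 <= a -> 0 <= a' -> 0 < b ->
  Fplus m1 mm1 a' b - Fplus m1 mm1 a b =
  (a' - a) * (M * b - (a' + b) * (a + b)) / ((a' + b) * (a + b)).
Proof.
move=> ha ha' hb.
have hab : a + b != 0 by rewrite gt_eqF //; lra.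
have ha'b : a' + b != 0 by rewrite gt_eqF //; lra.
by rewrite !FplusE // /M; field; rewrite hab ha'b.
Qed.

Lemma Fplus_le (a a' b : R) : 0 <= a -> 0 <= a' -> 0 < b ->
  (Fplus m1 mm1 a' b <= Fplus m1 mm1 a b) =
  ((a' - a) * (M * b - (a' + b) * (a + b)) <= 0).
Proof.
move=> ha ha' hb; rewrite -subr_le0 Fplus_subE //.
by rewrite pmulr_lle0 // invr_gt0 mulr_gt0 //; lra.
Qed.

Lemma best_replyP (a b : R) : 0 < a -> 0 < b ->
  best_reply m1 mm1 a b <-> M * b = (a + b) ^+ 2.
Proof.
move=> ha hb; have ha0 := ltW ha; split=> [H | E a' ha'].
- have hs : 0 < a + b by lra.
  apply/subr0_eq/(eq0_of_one_sided_max ha hs) => t ht.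
  have ht' : 0 <= a + t by lra.
  have -> : t * (M * b - (a + b) ^+ 2 - t * (a + b))
          = (a + t - a) * (M * b - (a + t + b) * (a + b)) by ring.
  by rewrite -Fplus_le //; apply: H.
- rewrite Fplus_le // E.
  have -> : (a' - a) * ((a + b) ^+ 2 - (a' + b) * (a + b)) = - ((a' - a) ^+ 2 * (a + b))
    by ring.
  by rewrite oppr_le0 mulr_ge0 ?sqr_ge0 //; lra.
Qed.

Lemma no_best_reply0 (a : R) : mm1 < m1 -> 0 <= a -> ~ best_reply m1 mm1 a 0.
Proof.
move=> hm ha H.
have Fplus_x0 x : 0 < x -> Fplus m1 mm1 x 0 = m1 - x.
  by move=> hx; rewrite FplusE addr0 ?gt_eqF //; field; rewrite gt_eqF.
have [a0 | ha0] := eqVneq a 0.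
  have hq : 0 < (m1 - mm1) / 4 by lra.
  by have := H _ (ltW hq); rewrite Fplus_x0 // a0 /Fplus /Defs.frac addr0 eqxx; lra.
have hapos : 0 < a by rewrite lt_def ha0.
have ha2 : 0 < a / 2 by lra.
by have := H _ (ltW ha2); rewrite !Fplus_x0 //; lra.
Qed.

End BestReply.

Lemma reply_equations_solution (R : realFieldType) (M N a b : R) :
  0 < M -> 0 < N -> 0 < a + b ->
  (M * b = (a + b) ^+ 2 /\ N * a = (a + b) ^+ 2) <->
  (a = M ^+ 2 * N / (M + N) ^+ 2 /\ b = M * N ^+ 2 / (M + N) ^+ 2).
Proof.
move=> hM hN hs; have hMN : M + N != 0 by rewrite gt_eqF //; lra.
split=> [[Eb Ea] | [-> ->]]; last by split; field.
have Nab : N * a = M * b by rewrite Ea Eb.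
have Es : (a + b) * (M + N) = M * N.
  apply: (mulfI (lt0r_neq0 hs)).
  have -> : (a + b) * ((a + b) * (M + N)) = M * (a + b) ^+ 2 + N * (a + b) ^+ 2 by ring.
  by rewrite -{1}Ea -Eb; ring.
have Ea' : a * (M + N) = M * (a + b) by rewrite mulrDr [a * N]mulrC Nab; ring.
have Eb' : b * (M + N) = N * (a + b) by rewrite mulrDr [b * M]mulrC -Nab; ring.
split; apply: (mulIf (expf_neq0 2 hMN)); rewrite divfK ?expf_neq0 // expr2 mulrA.
- by rewrite Ea' -mulrA Es; ring.
- by rewrite Eb' -mulrA Es; ring.
Qed.

Theorem mainTheorem13 (R : realFieldType) (m1 mm1 n1 nm1 : R)
  (hm : mm1 < m1) (hn : n1 < nm1) :
  let M := m1 - mm1 in let N := nm1 - n1 in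
  (forall a b : R, is_equilibrium m1 mm1 n1 nm1 a b <->
     (a = M ^+ 2 * N / (M + N) ^+ 2 /\ b = M * N ^+ 2 / (M + N) ^+ 2)) /\
  (0 < M ^+ 2 * N / (M + N) ^+ 2 /\ 0 < M * N ^+ 2 / (M + N) ^+ 2).
Proof.
move=> M N; have hM : 0 < M by rewrite subr_gt0.
have hN : 0 < N by rewrite subr_gt0.
have ha : 0 < M ^+ 2 * N / (M + N) ^+ 2 by rewrite divr_gt0 ?mulr_gt0 ?exprn_gt0 //; lra.
have hb : 0 < M * N ^+ 2 / (M + N) ^+ 2 by rewrite divr_gt0 ?mulr_gt0 ?exprn_gt0 //; lra.
split=> // a b; rewrite is_equilibriumE; split=> [[a0 b0 Ha Hb] | E].
- have {}b0 : 0 < b.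
    by rewrite lt_def b0 andbT; apply: contraPneq Ha => ->; exact: no_best_reply0.
  have {}a0 : 0 < a.
    by rewrite lt_def a0 andbT; apply: contraPneq Hb => ->; exact: no_best_reply0 (ltW b0).
  apply/reply_equations_solution => //; first by lra.
  by rewrite -(best_replyP _ _ a0 b0) [a + b]addrC -(best_replyP _ _ b0 a0).
- have [a0 b0] : 0 < a /\ 0 < b by case: E => -> ->.
  have hab : 0 < a + b by lra.
  have [Eb Ea] := proj2 (reply_equations_solution hM hN hab) E.
  split; rewrite ?ltW //; first exact/(best_replyP _ _ a0 b0).
  by apply/(best_replyP _ _ b0 a0); rewrite [b + a]addrC.
Qed.
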